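(* Let $\lambda>0$, $B,H>0$, $d,K\ge1$. Let $\mathcal T_1,\dots,\mathcal T_K$ be nonempty disjoint finite index sets with $\sum_{k}|\mathcal T_k|\le T$, and let $\phi_{k,t}\in\mathbb R^d$ ($k\in[K]$, $t\in\mathcal T_k$) satisfy $\|\phi_{k,t}\|_2\le BH$. Define $\Lambda_1=\lambda I$ and $\Lambda_{k+1}=\Lambda_k+\sum_{t\in\mathcal T_k}\phi_{k,t}\phi_{k,t}^\top$. Then $$\sum_{k=1}^K\frac1{|\mathcal T_k|}\sum_{t\in\mathcal T_k}\log\Big(1+|\mathcal T_k|\,\|\phi_{k,t}\|^2_{\Lambda_k^{-1}}\Big)\le d\log\Big(1+\frac{B^2H^2T}{\lambda d}\Big).$$
   Context: $\|v\|_Z=\sqrt{v^\top Zv}$ for a positive definite matrix $Z$. *)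

From HB Require Import structures.
From mathcomp Require Import all_boot all_order all_algebra.
From mathcomp Require Import all_classical all_reals all_analysis.
Set Implicit Arguments. Unset Strict Implicit. Unset Printing Implicit Defensive.
Import Order.TTheory GRing.Theory Num.Theory.
Local Open Scope ring_scope.

(* Blocks are 0-indexed: block k (0 <= k < K) has index set {0,..,n k - 1},
   i.e. T_{k+1} of the paper; the index sets are disjoint by construction. *)

Definition norm2 (R : realType) (d : nat) (v : 'cV[R]_d) : R :=
  Num.sqrt ((v^T *m v) ord0 ord0).

Definition mnorm (R : realType) (d : nat) (Z : 'M[R]_d) (v : 'cV[R]_d) : R :=
  Num.sqrt ((v^T *m Z *m v) ord0 ord0).

(* Lambda 0 = lam I (the paper's Lambda_1);
   Lambda (k+1) = Lambda k + sum_{t < n k} phi k t phi k t^T *)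
Fixpoint Lambda (R : realType) (d : nat) (lam : R) (n : nat -> nat)
    (phi : nat -> nat -> 'cV[R]_d) (k : nat) : 'M[R]_d :=
  match k with
  | O => lam%:M
  | k'.+1 => Lambda lam n phi k' + \sum_(t < n k') (phi k' t *m (phi k' t)^T)
  end.

From HB Require Import structures.
From mathcomp Require Import all_boot all_order all_algebra.
From mathcomp Require Import all_classical all_reals all_analysis.
From mathcomp Require Import ring lra.
Import Order.TTheory GRing.Theory Num.Theory.
Local Open Scope ring_scope.

Set Implicit Arguments. Unset Strict Implicit. Unset Printing Implicit Defensive.

(* Write q_L(f) = f^T L^-1 f.  The proof has three ingredients.
   1. Within block k, concavity of ln (Jensen) gives
        (1/|T_k|) sum_t ln (1 + |T_k| q(phi_t)) <= ln (1 + sum_t q(phi_t)).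
   2. For positive definite L, det (L + sum_t f_t f_t^T) >= det L (1 + sum_t q_L(f_t)).
      This follows by adding the rank-one terms one at a time: by the matrix
      determinant lemma and Sherman--Morrison, the potential
      M |-> det M (1 + sum_w q_M(w)) does not decrease when f f^T is added to M
      and f is removed from the test vectors (Cauchy--Schwarz for q_M).
      Hence each block contributes at most ln det Lambda_{k+1} - ln det Lambda_k.
   3. The sum telescopes to ln det Lambda_K - d ln lam, and Hadamard's inequality
      with AM-GM bounds ln det Lambda_K by d ln (tr Lambda_K / d), where
      tr Lambda_K <= lam d + B^2 H^2 T. *)

Section BilinearForm.
Variable R : comPzRingType.

Definition form n (S : 'M[R]_n) (x y : 'cV[R]_n) : R := (x^T *m S *m y) 0 0.

Lemma dotC n (x y : 'cV[R]_n) : (x^T *m y) 0 0 = (y^T *m x) 0 0.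
Proof.
have -> : x^T *m y = (y^T *m x)^T by rewrite trmx_mul trmxK.
by rewrite mxE.
Qed.

Lemma form_sym n (S : 'M[R]_n) x y : S^T = S -> form S y x = form S x y.
Proof.
move=> hS; rewrite /form.
have -> : x^T *m S *m y = (y^T *m S *m x)^T by rewrite !trmx_mul trmxK hS mulmxA.
by rewrite [RHS]mxE.
Qed.

Lemma formDl n (S : 'M[R]_n) x1 x2 y : form S (x1 + x2) y = form S x1 y + form S x2 y.
Proof. by rewrite /form linearD /= !mulmxDl mxE. Qed.

Lemma formDr n (S : 'M[R]_n) x y1 y2 : form S x (y1 + y2) = form S x y1 + form S x y2.
Proof. by rewrite /form !mulmxDr mxE. Qed.

Lemma formZl n (S : 'M[R]_n) a x y : form S (a *: x) y = a * form S x y.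
Proof. by rewrite /form linearZ /= -!scalemxAl mxE. Qed.

Lemma formZr n (S : 'M[R]_n) a x y : form S x (a *: y) = a * form S x y.
Proof. by rewrite /form -!scalemxAr mxE. Qed.

Lemma formDm n (S1 S2 : 'M[R]_n) x y : form (S1 + S2) x y = form S1 x y + form S2 x y.
Proof. by rewrite /form mulmxDr mulmxDl mxE. Qed.

Lemma formNm n (S : 'M[R]_n) x y : form (- S) x y = - form S x y.
Proof. by rewrite /form mulmxN mulNmx mxE. Qed.

Lemma formZm n (S : 'M[R]_n) a x y : form (a *: S) x y = a * form S x y.
Proof. by rewrite /form -scalemxAr -scalemxAl mxE. Qed.

Lemma form_outer n (u : 'cV[R]_n) (v : 'rV[R]_n) x y :
  form (u *m v) x y = (x^T *m u) 0 0 * (v *m y) 0 0.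
Proof. by rewrite /form !mulmxA -(mulmxA _ _ y) mxE big_ord1. Qed.

Lemma form_sqr n (f x : 'cV[R]_n) : form (f *m f^T) x x = (x^T *m f) 0 0 ^+ 2.
Proof. by rewrite form_outer [(f^T *m x) 0 0]dotC expr2. Qed.

Lemma form_delta n (M : 'M[R]_n) i : form M (delta_mx i 0) (delta_mx i 0) = M i i.
Proof. by rewrite /form trmx_delta -rowE -colE !mxE. Qed.

Lemma form_block n (a w : R) (b : 'rV[R]_n) (c : 'cV[R]_n) (D : 'M[R]_n) y :
  form (block_mx a%:M b c D : 'M[R]_(1 + n)) (col_mx w%:M y) (col_mx w%:M y) =
  a * w ^+ 2 + w * (b *m y) 0 0 + w * (y^T *m c) 0 0 + form D y y.
Proof.
rewrite /form tr_col_mx mul_row_block mul_row_col tr_scalar_mx !mul_scalar_mx.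
rewrite mxE mul_mx_scalar mulmxDl -scalemxAl !mxE !eqxx /= mulr1n.
ring.
Qed.

End BilinearForm.

Section Determinants.
Variable R : fieldType.

Lemma det_block1 n (a : R) (b : 'rV[R]_n) (c : 'cV[R]_n) (D : 'M[R]_n) : a != 0 ->
  \det (block_mx a%:M b c D : 'M[R]_(1 + n)) = a * \det (D - a^-1 *: (c *m b)).
Proof.
move=> a0.
have -> : (block_mx a%:M b c D : 'M[R]_(1 + n)) =
    block_mx 1%:M 0 (a^-1 *: c) 1%:M *m block_mx a%:M b 0 (D - a^-1 *: (c *m b)).
  rewrite mulmx_block ?mul1mx ?mul0mx ?mulmx0 ?addr0 ?add0r mul_mx_scalar scalerA mulfV //.
  by rewrite scale1r -scalemxAl addrC subrK.
by rewrite det_mulmx det_lblock det_ublock !det1 det_scalar1 !mul1r.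
Qed.

(* det (I + u v^T) = 1 + v^T u, by factoring a 2 x 2 block matrix in two ways. *)
Lemma det_rank1 n (u v : 'cV[R]_n) : \det (1%:M + u *m v^T) = 1 + (v^T *m u) 0 0.
Proof.
pose Bm : 'M[R]_(1 + n) := block_mx 1%:M (- v^T) u 1%:M.
have e1 : Bm = block_mx 1%:M 0 u 1%:M *m block_mx 1%:M (- v^T) 0 (1%:M + u *m v^T).
  rewrite mulmx_block ?mul1mx ?mul0mx ?mulmx0 ?addr0 ?add0r ?mulmx1 ?mul1mx //.
  by rewrite mulmxN addrCA addNr addr0.
have e2 : Bm = block_mx 1%:M (- v^T) 0 1%:M *m block_mx (1%:M + v^T *m u) 0 u 1%:M.
  rewrite mulmx_block ?mul1mx ?mul0mx ?mulmx0 ?addr0 ?add0r ?mulmx1 ?mul1mx //.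
  by rewrite mulNmx addrK.
have := congr1 determinant e1; rewrite e2 !det_mulmx !det_lblock !det_ublock.
by rewrite !det1 !mul1r mulr1 det_mx11 !mxE => <-.
Qed.

Lemma det_update n (M : 'M[R]_n) (f : 'cV[R]_n) : M \in unitmx ->
  \det (M + f *m f^T) = \det M * (1 + form (invmx M) f f).
Proof.
move=> hu.
have -> : M + f *m f^T = M *m (1%:M + (invmx M *m f) *m f^T).
  by rewrite mulmxDr mulmx1 !mulmxA mulmxV // mul1mx.
by rewrite det_mulmx det_rank1 /form mulmxA.
Qed.

End Determinants.

Section PositiveDefinite.
Variable R : realFieldType.

Definition psd n (S : 'M[R]_n) := S^T = S /\ forall x, 0 <= form S x x.
Definition pd n (S : 'M[R]_n) := S^T = S /\ forall x, x != 0 -> 0 < form S x x.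

(* Cauchy--Schwarz: the discriminant of s, t |-> form S (s x + t y) (s x + t y)
   is nonpositive. *)
Lemma psd_CS n (S : 'M[R]_n) x y : psd S -> form S x y ^+ 2 <= form S x x * form S y y.
Proof.
move=> [hS hq].
have hquad s t : 0 <= s ^+ 2 * form S x x + 2 * s * t * form S x y + t ^+ 2 * form S y y.
  have := hq (s *: x + t *: y).
  rewrite !(formDl, formDr, formZl, formZr) (form_sym y x hS).
  by congr (0 <= _); ring.
have hx := hq x; have hy := hq y.
set a := form S x x in hquad hx *; set b := form S y y in hquad hy *.
set c := form S x y in hquad *.
(* If b = 0 the quadratic form is affine in s, which forces c = 0;
   otherwise evaluate it at (s, t) = (b, -c). *)
have [b0|bpos] := eqVneq b 0.
  have := hquad c (- (a + 2)); rewrite b0 => h.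
  have -> : c = 0 by nra.
  by rewrite expr0n /= mulr0n; nra.
have bp : 0 < b by rewrite lt_neqAle eq_sym bpos hy.
have := hquad b (- c) => h.
have : 0 <= b * (a * b - c ^+ 2) by nra.
by rewrite pmulr_rge0 //; nra.
Qed.

Lemma pd_psd n (M : 'M[R]_n) : pd M -> psd M.
Proof.
case=> hs hp; split => // x; have [->|x0] := eqVneq x 0.
  by rewrite /form mulmx0 mxE.
exact: ltW (hp x x0).
Qed.

(* The identity form is the sum of squares of the coordinates. *)
Lemma form1_gt0 n (x : 'cV[R]_n) : x != 0 -> 0 < form 1%:M x x.
Proof.
move=> hx; rewrite /form mulmx1 mxE.
have [i hi] : exists i, x i 0 != 0.
  apply/existsP; apply: contraR hx => /existsPn h; apply/eqP/matrixP => i j.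
  by rewrite ord1 mxE; apply/eqP; move: (h i); rewrite negbK.
rewrite (bigD1 i) //=; apply: ltr_wpDr.
  by apply: sumr_ge0 => j _; rewrite mxE -expr2 sqr_ge0.
by rewrite mxE -expr2 exprn_even_gt0.
Qed.

Lemma pd_scalar n (lam : R) : 0 < lam -> pd (lam%:M : 'M[R]_n).
Proof.
move=> hl; split; first by rewrite tr_scalar_mx.
by move=> x x0; rewrite -scalemx1 formZm mulr_gt0 // form1_gt0.
Qed.

Lemma psd_rank1 n (f : 'cV[R]_n) : psd (f *m f^T).
Proof. by split; [rewrite trmx_mul trmxK | move=> x; rewrite form_sqr sqr_ge0]. Qed.

Lemma pd_add_psd n (A B : 'M[R]_n) : pd A -> psd B -> pd (A + B).
Proof.
case=> hsA hpA [hsB hpB]; split; first by rewrite linearD /= hsA hsB.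
by move=> x x0; rewrite formDm; apply: ltr_wpDr (hpB x) (hpA x x0).
Qed.

Lemma pd_add_sum n (A : 'M[R]_n) (f : nat -> 'cV[R]_n) s :
  pd A -> pd (A + \sum_(t < s) (f t *m (f t)^T)).
Proof.
move=> hA; elim: s => [|s IH]; first by rewrite big_ord0 addr0.
by rewrite big_ord_recr /= addrA; apply: pd_add_psd => //; apply: psd_rank1.
Qed.

Lemma pd_diag n (M : 'M[R]_n) i : pd M -> 0 < M i i.
Proof.
case=> _ hp; rewrite -form_delta; apply: hp.
by apply/eqP => /matrixP /(_ i 0) /eqP; rewrite !mxE !eqxx oner_eq0.
Qed.

Lemma pd_corner n (a : R) (b : 'rV[R]_n) (c : 'cV[R]_n) (D : 'M[R]_n) :
  pd (block_mx a%:M b c D : 'M[R]_(1 + n)) -> 0 < a.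
Proof.
by move=> /(pd_diag (lshift n ord0)); rewrite block_mxEul mxE eqxx mulr1n.
Qed.

(* The Schur complement of the corner of a positive definite matrix is positive
   definite: test the form on the vector (- b y / a, y). *)
Lemma pd_schur n (a : R) (b : 'rV[R]_n) (D : 'M[R]_n) :
  pd (block_mx a%:M b b^T D : 'M[R]_(1 + n)) -> pd (D - a^-1 *: (b^T *m b)).
Proof.
move=> hM; have ha := pd_corner hM; have [hsym hpos] := hM.
have hD : D^T = D.
  by have := congr1 drsubmx hsym; rewrite tr_block_mx !block_mxKdr.
split; first by rewrite linearD linearN linearZ /= trmx_mul trmxK hD.
move=> y y0; pose beta := (b *m y) 0 0.
have hyb : (y^T *m b^T) 0 0 = beta by rewrite -trmx_mul mxE.
have hSy : form (D - a^-1 *: (b^T *m b)) y y = form D y y - a^-1 * beta ^+ 2.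
  by rewrite formDm formNm formZm form_outer hyb expr2.
have hx : col_mx (- (a^-1 * beta))%:M y != 0.
  by rewrite col_mx_eq0 negb_and y0 orbT.
have hvalue : a * (- (a^-1 * beta)) ^+ 2 + - (a^-1 * beta) * beta
    + - (a^-1 * beta) * beta + form D y y = form D y y - a^-1 * beta ^+ 2.
  by field; rewrite gt_eqF.
by have := hpos _ hx; rewrite form_block hyb hSy hvalue.
Qed.

(* Hadamard's inequality for positive definite matrices (together with the
   positivity of the determinant), by induction via the Schur complement. *)
Lemma hadamard n (M : 'M[R]_n) : pd M -> 0 < \det M /\ \det M <= \prod_i M i i.
Proof.
elim: n M => [|n IH] M hM.
  by rewrite det_mx00 big_ord0; split; [exact: ltr01|].
pose M1 : 'M[R]_(1 + n) := M.
set a := ulsubmx M1 0 0; set b := ursubmx M1; set D := drsubmx M1.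
have hc : dlsubmx M1 = b^T by rewrite /b trmx_ursub hM.1.
have hblock : M1 = block_mx a%:M b b^T D by rewrite -hc -mx11_scalar submxK.
have hM1 : pd (block_mx a%:M b b^T D) by rewrite -hblock.
have ha := pd_corner hM1.
set S := D - a^-1 *: (b^T *m b).
have [detS_gt0 detS_le] := IH S (pd_schur hM1).
have hdet : \det M = a * \det S by rewrite -[M]/M1 hblock det_block1 // gt_eqF.
have hprod : \prod_(i < n.+1) M i i = a * \prod_i D i i.
  rewrite big_ord_recl; congr (_ * _).
    by rewrite /a !mxE; f_equal; apply: val_inj.
  by apply: eq_bigr => i _; rewrite /D !mxE; f_equal; apply: ord_inj.
have hSD i : 0 <= S i i <= D i i.
  rewrite (ltW (pd_diag i (pd_schur hM1))) /= /S [X in X <= _]mxE gerDl.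
  rewrite !mxE big_ord1 !mxE oppr_le0 -expr2 mulr_ge0 ?sqr_ge0 //.
  by rewrite invr_ge0 ltW.
rewrite hdet hprod; split; first exact: mulr_gt0.
rewrite ler_pM2l //; apply: (le_trans detS_le); exact: ler_prod.
Qed.

Lemma pd_trace_gt0 n (M : 'M[R]_n) : (0 < n)%N -> pd M -> 0 < \tr M.
Proof.
move=> hn hM; apply: lt_le_trans (pd_diag (Ordinal hn) hM) _.
rewrite /mxtrace (bigD1 (Ordinal hn)) //= lerDl.
by apply: sumr_ge0 => i _; exact: ltW (pd_diag i hM).
Qed.

Lemma pd_unit n (M : 'M[R]_n) : pd M -> M \in unitmx.
Proof. by move=> /hadamard [h _]; rewrite unitmxE unitfE gt_eqF. Qed.

Lemma pd_inv n (M : 'M[R]_n) : pd M -> pd (invmx M).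
Proof.
move=> hM; have hu := pd_unit hM; case: hM => hs hp; split.
  by rewrite trmx_inv hs.
move=> x x0; pose y := invmx M *m x.
have hx : x = M *m y by rewrite /y mulKVmx.
have y0 : y != 0 by apply: contraNneq x0 => e; rewrite hx e mulmx0.
by rewrite hx /form trmx_mul hs -!mulmxA mulKmx // mulmxA; apply: hp.
Qed.

Lemma sherman_morrison n (M : 'M[R]_n) (f : 'cV[R]_n) : pd M ->
  invmx (M + f *m f^T) =
  invmx M - (1 + form (invmx M) f f)^-1 *: ((invmx M *m f) *m (invmx M *m f)^T).
Proof.
move=> hM; have hu := pd_unit hM; have [hsi _] := pd_inv hM.
set y := form (invmx M) f f; set c := (1 + y)^-1; set u := invmx M *m f.
have y0 : 0 <= y by have [_] := pd_psd (pd_inv hM); apply.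
have hc : c * (1 + y) = 1 by rewrite mulVf // gt_eqF // ltr_wpDr.
have hNu : M + f *m f^T \in unitmx by apply/pd_unit/pd_add_psd/psd_rank1.
have hMu : M *m u = f by rewrite /u mulKVmx.
have hfu : f^T *m u = y%:M by rewrite /u mulmxA [LHS]mx11_scalar.
have hut : u^T = f^T *m invmx M by rewrite /u trmx_mul hsi.
have e1 : M *m (u *m u^T) = f *m u^T by rewrite mulmxA hMu.
have e2 : f *m f^T *m (u *m u^T) = y *: (f *m u^T).
  by rewrite -mulmxA (mulmxA f^T) hfu mul_scalar_mx scalemxAr.
have e3 : f *m f^T *m invmx M = f *m u^T by rewrite hut mulmxA.
have hright : (M + f *m f^T) *m (invmx M - c *: (u *m u^T)) = 1%:M.
  rewrite mulmxBr mulmxDl mulmxV // -scalemxAr mulmxDl e1 e2 e3 -addrA.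
  have -> : f *m u^T - c *: (f *m u^T + y *: (f *m u^T)) = (1 - c * (1 + y)) *: (f *m u^T).
    by rewrite scalerBl scale1r mulrDr mulr1 scalerDl scalerDr scalerA.
  by rewrite hc subrr scale0r addr0.
by rewrite -[RHS]mul1mx -(mulVmx hNu) -mulmxA hright mulmx1.
Qed.

Lemma form_inv_update n (M : 'M[R]_n) (f w : 'cV[R]_n) : pd M ->
  form (invmx (M + f *m f^T)) w w =
  form (invmx M) w w - form (invmx M) w f ^+ 2 / (1 + form (invmx M) f f).
Proof.
move=> hM; have hwu : (w^T *m (invmx M *m f)) 0 0 = form (invmx M) w f by rewrite mulmxA.
by rewrite sherman_morrison // formDm formNm formZm form_sqr hwu mulrC.
Qed.

(* The potential M |-> det M (1 + sum_w w^T M^-1 w) does not decrease when f f^T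
   is added to M and f is removed from the list of test vectors: by the matrix
   determinant lemma and Sherman--Morrison this reduces, term by term, to the
   Cauchy--Schwarz bound (w^T M^-1 f)^2 <= (w^T M^-1 w) (f^T M^-1 f). *)
Lemma potential_step n (M : 'M[R]_n) (f : 'cV[R]_n) (ws : seq 'cV[R]_n) : pd M ->
  \det M * (1 + form (invmx M) f f + \sum_(w <- ws) form (invmx M) w w) <=
  \det (M + f *m f^T) * (1 + \sum_(w <- ws) form (invmx (M + f *m f^T)) w w).
Proof.
move=> hM; have hps := pd_psd (pd_inv hM).
rewrite det_update ?pd_unit //.
set y := form (invmx M) f f.
have y0 : 0 <= y by case: hps => _; apply.
have y1 : 1 + y != 0 by rewrite gt_eqF // ltr_wpDr.
have [hdet _] := hadamard hM.
rewrite -mulrA ler_pM2l //.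
under [X in _ <= _ * (1 + X)]eq_bigr => w _ do rewrite form_inv_update //.
rewrite mulrDr mulr1 lerD2l mulr_sumr; apply: ler_sum => w _.
have := psd_CS w f hps; rewrite -/y.
set q := form (invmx M) w w; set c := form (invmx M) w f.
have q0 : 0 <= q by case: hps => _; apply.
by move=> hcs; rewrite mulrBr [(1 + y) * (_ / _)]mulrC divfK //; nra.
Qed.

Lemma potential_batch n (L : 'M[R]_n) (f : nat -> 'cV[R]_n) s (ws : seq 'cV[R]_n) :
  pd L ->
  \det L * (1 + \sum_(t < s) form (invmx L) (f t) (f t) + \sum_(w <- ws) form (invmx L) w w)
  <= \det (L + \sum_(t < s) (f t *m (f t)^T)) *
     (1 + \sum_(w <- ws) form (invmx (L + \sum_(t < s) (f t *m (f t)^T))) w w).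
Proof.
move=> hL; elim: s ws => [|s IH] ws; first by rewrite !big_ord0 !addr0.
have hM := pd_add_sum f s hL.
set M := L + \sum_(t < s) (f t *m (f t)^T) in hM IH *.
have -> : L + \sum_(t < s.+1) (f t *m (f t)^T) = M + f s *m (f s)^T.
  by rewrite big_ord_recr /= addrA.
have hIH := IH (f s :: ws); rewrite !big_cons !addrA in hIH.
apply: le_trans _ (le_trans hIH (potential_step (f s) ws hM)).
by rewrite big_ord_recr /= !addrA lexx.
Qed.

Lemma det_batch_ge n (L : 'M[R]_n) (f : nat -> 'cV[R]_n) s : pd L ->
  \det L * (1 + \sum_(t < s) form (invmx L) (f t) (f t))
  <= \det (L + \sum_(t < s) (f t *m (f t)^T)).
Proof.
by move=> hL; have := potential_batch f s [::] hL; rewrite !big_nil !addr0 mulr1.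
Qed.

End PositiveDefinite.

Section LogBounds.
Variable R : realType.

Lemma ln_tangent (a z : R) : 0 < a -> 0 < z -> ln a <= ln z + (a / z - 1).
Proof.
move=> ha hz.
have -> : ln a = ln z + ln (a / z) by rewrite -lnM ?posrE ?divr_gt0 // mulrC divfK // gt_eqF.
rewrite lerD2l; have := @le_ln1Dx R (a / z - 1).
rewrite addrCA subrr addr0; apply.
by rewrite ltrBrDl subrr divr_gt0.
Qed.

Lemma mean_ln_le (m : nat) (x : 'I_m -> R) : (0 < m)%N -> (forall t, 0 <= x t) ->
  m%:R^-1 * \sum_(t < m) ln (1 + m%:R * x t) <= ln (1 + \sum_(t < m) x t).
Proof.
move=> hm hx; set S := \sum_(t < m) x t.
have hz : 0 < 1 + S by rewrite ltr_wpDr // sumr_ge0.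
have hmR : 0 < m%:R :> R by rewrite ltr0n.
have htan t : ln (1 + m%:R * x t) <= ln (1 + S) + ((1 + m%:R * x t) / (1 + S) - 1).
  by apply: ln_tangent hz; rewrite ltr_wpDr // mulr_ge0 // ltW.
have hmean : \sum_(t < m) ((1 + m%:R * x t) / (1 + S) - 1) = 0.
  rewrite sumrB sumr_const card_ord -mulr_suml big_split /= sumr_const card_ord.
  by rewrite -mulr_sumr -/S -mulr_natl mulr1 -{1}(mulr1 m%:R) -mulrDr mulfK ?gt_eqF // subrr.
rewrite ler_pdivrMl //; apply: le_trans (ler_sum _ (fun t _ => htan t)) _.
by rewrite big_split /= hmean sumr_const card_ord addr0 mulr_natl.
Qed.

(* Hadamard's inequality and AM-GM on the diagonal:
   ln det M <= n ln (tr M / n) for positive definite M. *)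
Lemma ln_det_le_trace n (M : 'M[R]_n) : (0 < n)%N -> pd M ->
  ln (\det M) <= ln (\tr M / n%:R) *+ n.
Proof.
move=> hn hM; have [det_gt0 det_le] := hadamard hM.
have tr_gt0 := pd_trace_gt0 hn hM.
have [hAGM _] := leif_AGM (A := predT) (E := fun i => M i i) (fun i _ => ltW (pd_diag i hM)).
rewrite card_ord in hAGM.
rewrite -lnXn ?divr_gt0 ?ltr0n // ler_ln ?posrE ?exprn_gt0 ?divr_gt0 ?ltr0n //.
exact: le_trans det_le hAGM.
Qed.

Lemma norm2_sqr d (f : 'cV[R]_d) : norm2 f ^+ 2 = form 1%:M f f.
Proof.
have := (pd_psd (pd_scalar d (@ltr01 R))).2 f.
by rewrite /norm2 /form mulmx1 => h; rewrite sqr_sqrtr.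
Qed.

Lemma mnorm_sqr d (Z : 'M[R]_d) v : psd Z -> mnorm Z v ^+ 2 = form Z v v.
Proof. by move=> [_ hZ]; rewrite /mnorm sqr_sqrtr //; exact: hZ. Qed.

End LogBounds.

Section DesignMatrices.
Variables (R : realType) (lam : R) (d : nat) (n : nat -> nat) (phi : nat -> nat -> 'cV[R]_d).
Hypothesis lam_gt0 : 0 < lam.

Lemma Lambda_pd k : pd (Lambda lam n phi k).
Proof. by elim: k => [|k IH] /=; [exact: pd_scalar | exact: pd_add_sum]. Qed.

Lemma Lambda_trace k : \tr (Lambda lam n phi k) =
  lam *+ d + \sum_(j < k) \sum_(t < n j) norm2 (phi j t) ^+ 2.
Proof.
elim: k => [|k IH] /=; first by rewrite mxtrace_scalar big_ord0 addr0.
rewrite mxtraceD IH big_ord_recr /= -addrA raddf_sum; congr (_ + (_ + _)).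
by apply: eq_bigr => t _; rewrite /= norm2_sqr mxtrace_mulC /form mulmx1 /mxtrace big_ord1.
Qed.

(* One block of the regret sum is bounded by the growth of ln det Lambda:
   Jensen within the block, then the batched elliptical potential. *)
Lemma block_le_logdet k : (0 < n k)%N ->
  (n k)%:R^-1 * \sum_(t < n k) ln (1 + (n k)%:R * mnorm (invmx (Lambda lam n phi k)) (phi k t) ^+ 2)
  <= ln (\det (Lambda lam n phi k.+1)) - ln (\det (Lambda lam n phi k)).
Proof.
move=> hnk; set L := Lambda lam n phi k.
have hL : pd L := Lambda_pd k.
have hpsd := pd_psd (pd_inv hL).
have q_ge0 t : 0 <= form (invmx L) (phi k t) (phi k t) by exact: hpsd.2.
under eq_bigr => t _ do rewrite mnorm_sqr //.
have hjensen := mean_ln_le (x := fun t : 'I_(n k) => form (invmx L) (phi k t) (phi k t)) hnk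
  (fun t => q_ge0 t).
apply: le_trans hjensen _.
have [detL_gt0 _] := hadamard hL; have [det_next_gt0 _] := hadamard (Lambda_pd k.+1).
have hS : 0 < 1 + \sum_(t < n k) form (invmx L) (phi k t) (phi k t).
  by rewrite ltr_wpDr // sumr_ge0.
rewrite -ln_div ?posrE // ler_ln ?posrE ?divr_gt0 // ler_pdivlMr // mulrC.
exact: det_batch_ge.
Qed.

Lemma trace_Lambda_le K T c : (\sum_(k < K) n k <= T)%N ->
  (forall k t, (k < K)%N -> (t < n k)%N -> norm2 (phi k t) <= c) ->
  \tr (Lambda lam n phi K) <= lam *+ d + c ^+ 2 *+ T.
Proof.
move=> hT hphi; rewrite Lambda_trace lerD2l.
apply: (@le_trans _ _ (\sum_(j < K) c ^+ 2 *+ n j)); last first.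
  by rewrite sumrMnr; apply: ler_wpMn2l; [exact: sqr_ge0 | exact: hT].
apply: ler_sum => j _.
apply: (@le_trans _ _ (\sum_(t < n j) c ^+ 2)); last by rewrite sumr_const card_ord.
apply: ler_sum => t _.
have norm_le := hphi _ _ (ltn_ord j) (ltn_ord t).
have norm_ge0 : 0 <= norm2 (phi j t) by exact: sqrtr_ge0.
by rewrite ler_sqr ?nnegrE // (le_trans norm_ge0 norm_le).
Qed.

End DesignMatrices.

Theorem mainTheorem10 (R : realType) (lam B H : R) (d K T : nat)
    (n : nat -> nat) (phi : nat -> nat -> 'cV[R]_d) :
  0 < lam -> 0 < B -> 0 < H -> (1 <= d)%N -> (1 <= K)%N ->
  (forall k, (k < K)%N -> (0 < n k)%N) ->
  (\sum_(k < K) n k <= T)%N ->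
  (forall k t, (k < K)%N -> (t < n k)%N -> norm2 (phi k t) <= B * H) ->
  \sum_(k < K) ((n k)%:R^-1 *
     \sum_(t < n k) ln (1 + (n k)%:R * (mnorm (invmx (Lambda lam n phi k)) (phi k t)) ^+ 2))
  <= d%:R * ln (1 + B ^+ 2 * H ^+ 2 * T%:R / (lam * d%:R)).
Proof.
move=> lam_gt0 _ _ d_gt0 _ n_gt0 hT hphi.
pose logdet k := ln (\det (Lambda lam n phi k)).
(* Bound each block by the increment of ln det Lambda and telescope. *)
apply: le_trans (ler_sum _ (fun (k : 'I_K) _ =>
  block_le_logdet phi lam_gt0 (n_gt0 k (ltn_ord k)))) _.
rewrite -(big_mkord xpredT (fun k => logdet k.+1 - logdet k)) telescope_sumr //.
rewrite /logdet /= det_scalar lnXn //.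
have hdR : 0 < d%:R :> R by rewrite ltr0n.
have hpdK := Lambda_pd n phi lam_gt0 K.
have tr_gt0 := pd_trace_gt0 d_gt0 hpdK.
have htr : \tr (Lambda lam n phi K) / d%:R / lam <=
    1 + B ^+ 2 * H ^+ 2 * T%:R / (lam * d%:R).
  have -> : 1 + B ^+ 2 * H ^+ 2 * T%:R / (lam * d%:R) =
      (lam *+ d + (B * H) ^+ 2 *+ T) / d%:R / lam.
    by rewrite -(mulr_natr lam) -(mulr_natr ((B * H) ^+ 2)); field; rewrite !gt_eqF.
  by rewrite !ler_pM2r ?invr_gt0 //; move: (trace_Lambda_le lam hT hphi).
(* Hadamard and AM-GM: ln det Lambda_K <= d ln (tr Lambda_K / d). *)
apply: le_trans (_ : _ <= ln (\tr (Lambda lam n phi K) / d%:R / lam) *+ d) _.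
  by rewrite ln_div ?posrE ?divr_gt0 // mulrnBl lerD2r ln_det_le_trace.
rewrite -[X in X <= _]mulr_natl ler_pM2l // ler_ln ?posrE ?divr_gt0 //.
exact: lt_le_trans (divr_gt0 (divr_gt0 tr_gt0 hdR) lam_gt0) htr.
Qed.
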